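(* Let $n\ge5$ and let $\varrho:H_n\to\mathcal L$ be a homomorphism. For $p\in\overline{\mathrm B}W$ put $p_0:=p$ and $p_i:=\varrho(r_i)p_{i-1}$ for $i=1,\dots,n$ (so $p_n=p_0$), and $\mathrm{Area}(p;\varrho):=\mathrm{Area}(p_1,p_2,\dots,p_n)$. Then $\mathrm{Area}(p;\varrho)$ does not depend on the choice of $p\in\overline{\mathrm B}W$. Moreover, if $\varrho(r_i)\ne1$ for all $i$, then $\mathrm{Area}(p;\varrho)\equiv n\pi\pmod{2\pi}$.
   Context: Let $W$ be a 2-dimensional complex vector space with a hermitian form $\langle\cdot,\cdot\rangle$ of signature $(+,-)$. In $\mathbb{CP}W$ let $\mathrm BW$ be the set of negative points (the Poincaré disc, with hyperbolic metric of curvature $-1$ and the orientation given by its complex structure), $\mathrm SW$ the set of isotropic points (its ideal boundary), and $\overline{\mathrm B}W=\mathrm BW\cup\mathrm SW$. Let $\mathcal L=\mathrm{PU}(W)$ be the group of orientation-preserving isometries of $\mathrm BW$ (it acts on $\overline{\mathrm B}W$). For $p_1,p_2,p_3\in\overline{\mathrm B}W$ the oriented area is $\mathrm{Area}\,\Delta(p_1,p_2,p_3)=2\arg\big(-\langle p_1,p_2\rangle\langle p_2,p_3\rangle\langle p_3,p_1\rangle\big)$ (with $\arg\in[-\pi,\pi]$, computed with any representatives in $W$) when no two vertices are equal isotropic points, and $0$ otherwise; it is the signed area of the geodesic triangle, positive for vertices in counterclockwise order. For $p_1,\dots,p_m\in\overline{\mathrm B}W$, $\mathrm{Area}(p_1,\dots,p_m):=\sum_{k=1}^m\mathrm{Area}\,\Delta(c,p_k,p_{k+1})$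 (indices mod $m$) for any $c\in\overline{\mathrm B}W$; this is independent of $c$. For $n\ge5$, $H_n$ is the group generated by $r_1,\dots,r_n$ with defining relations $r_i^2=1$ ($i=1,\dots,n$) and $r_nr_{n-1}\cdots r_2r_1=1$. *)

From Stdlib Require Import Reals List ZArith.
From Stdlib Require Import ClassicalDescription.
From Coquelicot Require Import Complex.
Open Scope R_scope.

(* Vectors of W = C^2 and 2x2 complex matrices. *)
Record vec := Vec { v1 : Complex.C; v2 : Complex.C }.
Record mat := Mat { m11 : Complex.C; m12 : Complex.C; m21 : Complex.C; m22 : Complex.C }.

Definition vzero : vec := Vec (RtoC 0) (RtoC 0).

Definition mv (M : mat) (u : vec) : vec :=
  Vec (Cplus (Cmult (m11 M) (v1 u)) (Cmult (m12 M) (v2 u)))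
      (Cplus (Cmult (m21 M) (v1 u)) (Cmult (m22 M) (v2 u))).

Definition mm (M N : mat) : mat :=
  Mat (Cplus (Cmult (m11 M) (m11 N)) (Cmult (m12 M) (m21 N)))
      (Cplus (Cmult (m11 M) (m12 N)) (Cmult (m12 M) (m22 N)))
      (Cplus (Cmult (m21 M) (m11 N)) (Cmult (m22 M) (m21 N)))
      (Cplus (Cmult (m21 M) (m12 N)) (Cmult (m22 M) (m22 N))).

Definition scalar_mat (l : Complex.C) : mat := Mat l (RtoC 0) (RtoC 0) l.
Definition is_scalar (M : mat) : Prop := exists l : Complex.C, M = scalar_mat l.

(* The hermitian form <u,v> = sum_{ij} u_i H_ij conj(v_j)  (linear in the first
   argument, antilinear in the second), given by its Gram matrix H. *)
Definition herm (H : mat) (u v : vec) : Complex.C :=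
  Cplus (Cplus (Cmult (Cmult (v1 u) (m11 H)) (Cconj (v1 v)))
               (Cmult (Cmult (v1 u) (m12 H)) (Cconj (v2 v))))
        (Cplus (Cmult (Cmult (v2 u) (m21 H)) (Cconj (v1 v)))
               (Cmult (Cmult (v2 u) (m22 H)) (Cconj (v2 v)))).

Definition hermitian_mat (H : mat) : Prop :=
  m11 H = Cconj (m11 H) /\ m22 H = Cconj (m22 H) /\ m21 H = Cconj (m12 H).

Definition signature_pm (H : mat) : Prop :=
  hermitian_mat H /\
  (exists u, Re (herm H u u) > 0) /\ (exists v, Re (herm H v v) < 0).

(* Points of CP W are represented by nonzero vectors. *)
Definition negative_pt (H : mat) (p : vec) : Prop := p <> vzero /\ Re (herm H p p) < 0.
Definition isotropic_pt (H : mat) (p : vec) : Prop := p <> vzero /\ herm H p p = RtoC 0.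
Definition closed_ball_pt (H : mat) (p : vec) : Prop :=
  negative_pt H p \/ isotropic_pt H p.

Definition same_point (p q : vec) : Prop :=
  exists l : Complex.C, l <> RtoC 0 /\ p = Vec (Cmult l (v1 q)) (Cmult l (v2 q)).

(* principal argument, with values in (-PI, PI]; arg 0 := 0 *)
Definition arg (z : Complex.C) : R :=
  let x := Re z in let y := Im z in
  if Rlt_dec 0 x then atan (y / x)
  else if Rlt_dec x 0 then
         (if Rle_dec 0 y then atan (y / x) + PI else atan (y / x) - PI)
  else if Rlt_dec 0 y then PI / 2
  else if Rlt_dec y 0 then - (PI / 2)
  else 0.

Definition two_equal_isotropic (H : mat) (p1 p2 p3 : vec) : Prop :=
  (isotropic_pt H p1 /\ same_point p1 p2) \/
  (isotropic_pt H p2 /\ same_point p2 p3) \/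
  (isotropic_pt H p3 /\ same_point p3 p1).

Definition area_tri (H : mat) (p1 p2 p3 : vec) : R :=
  if excluded_middle_informative (two_equal_isotropic H p1 p2 p3) then 0
  else 2 * arg (Copp (Cmult (Cmult (herm H p1 p2) (herm H p2 p3)) (herm H p3 p1))).

Definition area_poly (H : mat) (c : vec) (ps : nat -> vec) (m : nat) : R :=
  fold_right Rplus 0
    (map (fun k => area_tri H c (ps k) (ps (if Nat.eqb k m then 1%nat else S k)))
         (seq 1 m)).

Definition unitary (H : mat) (g : mat) : Prop :=
  forall u v, herm H (mv g u) (mv g v) = herm H u v.

(* A homomorphism rho : H_n -> PU(W) is given by lifts Rl 1, ..., Rl n in U(W) of
   rho(r_1), ..., rho(r_n) satisfying the defining relations of H_n in PU(W)
   = U(W)/scalars: each Rl i ^2 is scalar and Rl n ... Rl 1 is scalar. *)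
Fixpoint prod_lifts (Rl : nat -> mat) (k : nat) : mat :=
  match k with
  | O => scalar_mat (RtoC 1)
  | S k' => mm (Rl k) (prod_lifts Rl k')
  end.

Definition is_Hn_rep (H : mat) (n : nat) (Rl : nat -> mat) : Prop :=
  (forall i, (1 <= i <= n)%nat -> unitary H (Rl i)) /\
  (forall i, (1 <= i <= n)%nat -> is_scalar (mm (Rl i) (Rl i))) /\
  is_scalar (prod_lifts Rl n).

Fixpoint orbit_pts (Rl : nat -> mat) (p : vec) (i : nat) : vec :=
  match i with
  | O => p
  | S i' => mv (Rl i) (orbit_pts Rl p i')
  end.

Definition area_rho (H : mat) (n : nat) (Rl : nat -> mat) (c p : vec) : R :=
  area_poly H c (orbit_pts Rl p) n.

(* The area of a geodesic triangle is twice the argument of the triple product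
   [- <a,b> <b,c> <c,a>], whose real part is nonnegative on the closed disc by the reverse
   Cauchy-Schwarz inequality (det H < 0). So all arguments involved lie in [-PI/2, PI/2], and
   the cocycle relation Area(a,b,c) = Area(o,a,b) + Area(o,b,c) + Area(o,c,a) holds exactly;
   telescoped along the polygon it makes Area(p; rho) independent of the base point c.

   Each rho(r_i) lifts to a unitary J with J^2 = s scalar, |s| = 1. If J is not scalar and
   [Cconj w = s w], then [conj w <a, J b>] is a definite hermitian form; comparing it at o and
   at a gives Area(o,a,Ja) = Area(o,a,Jo), and with the cocycle relation the quadrilateral
   (a, Ja, Jb, b) has area 0. Telescoping these quadrilaterals along two orbits shows that
   Area(p; rho) does not depend on p.

   For p = c negative, Area(p; rho) is twice the argument of the product of the triple
   products, up to 4 PI Z. The square of that product is a positive multiple of the product of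
   the [<p_(i-1), J_i p_(i-1)>^2 det J_i], each a negative real, so it is (-1)^n times a
   positive real, and Area(p; rho) = n PI modulo 2 PI. *)

From Stdlib Require Import Reals ZArith Lra Lia Psatz List ClassicalDescription Classical.
From Coquelicot Require Import Complex.
Open Scope R_scope.
Set Bullet Behavior "Strict Subproofs".

Definition Cnorm2 (z : C) : R := Re z * Re z + Im z * Im z.

Lemma Cconj_RtoC (a : R) : Cconj a = a.
Proof. unfold Cconj, RtoC; simpl. f_equal. ring. Qed.

Lemma RtoC_m1 : RtoC (-1) = Copp 1.
Proof. unfold RtoC, Copp; simpl. f_equal; ring. Qed.

Lemma Cconj_eq_real (z : C) : z = Cconj z -> z = Re z.
Proof. destruct z as [x y]. unfold Cconj, RtoC; simpl. intros E. inversion E. f_equal. lra. Qed.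

Lemma Cmult_conj_Cnorm2 (z : C) : (z * Cconj z)%C = Cnorm2 z.
Proof. destruct z as [x y]. unfold Cnorm2, Cconj, RtoC, Cmult; simpl. f_equal; ring. Qed.

Lemma Cnorm2_ge_0 z : 0 <= Cnorm2 z.
Proof. unfold Cnorm2. nra. Qed.

Lemma Cnorm2_RtoC_0 : Cnorm2 0 = 0.
Proof. unfold Cnorm2; simpl. ring. Qed.

Lemma Cnorm2_gt_0 (z : C) : z <> 0 -> 0 < Cnorm2 z.
Proof.
  destruct z as [x y]. unfold Cnorm2; simpl. intros Hz.
  destruct (Req_dec x 0); destruct (Req_dec y 0); try nra.
  subst. exfalso. apply Hz. reflexivity.
Qed.

Lemma Cnorm2_eq_0 z : Cnorm2 z = 0 -> z = 0.
Proof.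
  intros E. destruct (classic (z = 0)) as [|N]; auto. apply Cnorm2_gt_0 in N. lra.
Qed.

Lemma Cmult_integral (z w : C) : (z * w)%C = 0 -> z = 0 \/ w = 0.
Proof.
  intros E. destruct (classic (z = 0)); auto. destruct (classic (w = 0)); auto.
  exfalso. apply (Cmult_neq_0 z w); auto.
Qed.

Lemma Cmult_eq_reg_l (a x y : C) : (a * x)%C = (a * y)%C -> a <> 0 -> x = y.
Proof.
  intros E Ha. replace x with (/ a * (a * x))%C by (field; auto).
  rewrite E. field; auto.
Qed.

Lemma sqrt_scale (x t : R) : 0 < x -> sqrt (x * x + (x * t) * (x * t)) = x * sqrt (1 + t * t).
Proof.
  intros Hx. replace (x * x + (x * t) * (x * t)) with ((x * x) * (1 + t * t)) by ring.
  rewrite sqrt_mult_alt by nra. rewrite sqrt_square by lra. reflexivity.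
Qed.

Lemma cos_minus_PI (a : R) : cos (a - PI) = - cos a.
Proof.
  replace (a - PI) with ((a + PI) - 2 * PI) by ring.
  rewrite cos_minus, cos_2PI, sin_2PI, neg_cos. ring.
Qed.

Lemma sin_minus_PI (a : R) : sin (a - PI) = - sin a.
Proof.
  replace (a - PI) with ((a + PI) - 2 * PI) by ring.
  rewrite sin_minus, cos_2PI, sin_2PI, neg_sin. ring.
Qed.

Lemma Cmod_polar (z : C) : z <> 0 ->
  Cmod z * cos (arg z) = Re z /\ Cmod z * sin (arg z) = Im z.
Proof.
  destruct z as [x y]. intros Hz. unfold arg, Cmod, Re, Im; simpl.
  replace (x * (x * 1) + y * (y * 1)) with (x * x + y * y) by ring.
  destruct (Rlt_dec 0 x) as [Hx|Hx].
  - rewrite cos_atan, sin_atan. unfold Rsqr.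
    set (t := y / x). assert (Ey : y = x * t) by (unfold t; field; lra).
    assert (E : sqrt (x * x + y * y) = x * sqrt (1 + t * t)) by (rewrite Ey; apply sqrt_scale; lra).
    assert (0 < sqrt (1 + t * t)) by (apply sqrt_lt_R0; nra).
    rewrite E, Ey. split; field; lra.
  - destruct (Rlt_dec x 0) as [Hx'|Hx'].
    + set (t := y / x). assert (Ey : y = x * t) by (unfold t; field; lra).
      assert (E : sqrt (x * x + y * y) = (- x) * sqrt (1 + t * t)).
      { rewrite Ey, <- sqrt_scale by lra. f_equal. ring. }
      assert (0 < sqrt (1 + t * t)) by (apply sqrt_lt_R0; nra).
      destruct (Rle_dec 0 y);
        [rewrite neg_cos, neg_sin | rewrite cos_minus_PI, sin_minus_PI];
        rewrite cos_atan, sin_atan; unfold Rsqr; rewrite E, Ey; split; field; lra.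
    + assert (x = 0) by lra. subst x.
      replace (0 * 0 + y * y) with (y * y) by ring.
      destruct (Rlt_dec 0 y).
      * rewrite cos_PI2, sin_PI2, sqrt_square by lra. split; ring.
      * destruct (Rlt_dec y 0).
        -- rewrite cos_neg, sin_neg, cos_PI2, sin_PI2.
           replace (y * y) with ((- y) * (- y)) by ring.
           rewrite sqrt_square by lra. split; ring.
        -- exfalso. apply Hz. replace y with 0 by lra. reflexivity.
Qed.

Lemma arg_right_half_plane (z : C) : 0 <= Re z -> z <> 0 -> - (PI / 2) <= arg z <= PI / 2.
Proof.
  destruct z as [x y]. unfold arg, Re, Im; simpl. intros Hx Hz.
  pose proof PI_RGT_0. pose proof (atan_bound (y / x)).
  destruct (Rlt_dec 0 x). lra.
  destruct (Rlt_dec x 0). lra.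
  destruct (Rlt_dec 0 y). lra. destruct (Rlt_dec y 0); lra.
Qed.

Lemma arg_open_right_half_plane (z : C) : 0 < Re z -> - (PI / 2) < arg z < PI / 2.
Proof.
  destruct z as [x y]. unfold arg, Re, Im; simpl. intros Hx.
  pose proof (atan_bound (y / x)). destruct (Rlt_dec 0 x); lra.
Qed.

Lemma arg_scal_pos (r : R) (z : C) : 0 < r -> arg (r * z)%C = arg z.
Proof.
  destruct z as [x y]. intros Hr. unfold arg, Re, Im, RtoC, Cmult; simpl.
  replace (r * x - 0 * y) with (r * x) by ring. replace (r * y + 0 * x) with (r * y) by ring.
  destruct (Rlt_dec 0 x); destruct (Rlt_dec 0 (r * x)); try nra.
  - f_equal. field. lra.
  - destruct (Rlt_dec x 0); destruct (Rlt_dec (r * x) 0); try nra.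
    + destruct (Rle_dec 0 y); destruct (Rle_dec 0 (r * y)); try nra;
        replace (r * y / (r * x)) with (y / x) by (field; lra); reflexivity.
    + assert (x = 0) by lra. subst x.
      destruct (Rlt_dec 0 y); destruct (Rlt_dec 0 (r * y)); try nra.
      destruct (Rlt_dec y 0); destruct (Rlt_dec (r * y) 0); try nra.
Qed.

Lemma arg_conj (z : C) : 0 <= Re z -> arg (Cconj z) = - arg z.
Proof.
  destruct z as [x y]. unfold arg, Re, Im, Cconj; simpl. intros Hx.
  destruct (Rlt_dec 0 x).
  - replace (- y / x) with (- (y / x)) by (field; lra). apply atan_opp.
  - destruct (Rlt_dec x 0). lra.
    repeat match goal with |- context [Rlt_dec ?a ?b] => destruct (Rlt_dec a b) end; lra.
Qed.

Lemma arg_nonneg_real (r : R) : 0 <= r -> arg r = 0.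
Proof.
  intros Hr. unfold arg, RtoC; simpl.
  destruct (Rlt_dec 0 r). replace (0 / r) with 0 by (field; lra). apply atan_0.
  destruct (Rlt_dec r 0). lra. destruct (Rlt_dec 0 0). lra. destruct (Rlt_dec 0 0); lra.
Qed.

Lemma arg_neg_real (r : R) : r < 0 -> arg r = PI.
Proof.
  intros Hr. unfold arg, RtoC; simpl.
  destruct (Rlt_dec 0 r). lra. destruct (Rlt_dec r 0); [|lra].
  destruct (Rle_dec 0 0); [|lra]. replace (0 / r) with 0 by (field; lra).
  rewrite atan_0. ring.
Qed.

Lemma cos_sin_eq_mod_2PI (a b : R) : cos a = cos b -> sin a = sin b ->
  exists k : Z, a = b + 2 * IZR k * PI.
Proof.
  intros Hc Hs.
  assert (H1 : cos (a - b) = 1).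
  { rewrite cos_minus, Hc, Hs. pose proof (sin2_cos2 b). unfold Rsqr in *. lra. }
  assert (H2 : sin ((a - b) / 2) = 0).
  { replace (a - b) with (2 * ((a - b) / 2)) in H1 by field. rewrite cos_2a_sin in H1. nra. }
  destruct (sin_eq_0_0 _ H2) as [k Hk]. exists k. lra.
Qed.

Lemma arg_Cmult (z w : C) : z <> 0 -> w <> 0 ->
  exists k : Z, arg z + arg w = arg (z * w)%C + 2 * IZR k * PI.
Proof.
  intros Hz Hw.
  destruct (Cmod_polar z Hz) as [Hz1 Hz2]. destruct (Cmod_polar w Hw) as [Hw1 Hw2].
  destruct (Cmod_polar _ (Cmult_neq_0 z w Hz Hw)) as [H1 H2].
  rewrite Cmod_mult in H1, H2.
  apply Cmod_gt_0 in Hz. apply Cmod_gt_0 in Hw.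
  destruct z as [a b]; destruct w as [c d]. simpl in *.
  set (mz := Cmod (a, b)) in *. set (mw := Cmod (c, d)) in *.
  set (az := arg (a, b)) in *. set (aw := arg (c, d)) in *. clearbody mz mw az aw.
  apply cos_sin_eq_mod_2PI.
  - rewrite cos_plus. apply (Rmult_eq_reg_l (mz * mw)); [|nra].
    rewrite H1, <- Hz1, <- Hz2, <- Hw1, <- Hw2. ring.
  - rewrite sin_plus. apply (Rmult_eq_reg_l (mz * mw)); [|nra].
    rewrite H2, <- Hz1, <- Hz2, <- Hw1, <- Hw2. ring.
Qed.

Lemma arg_sqrt_sign (z : C) (n : nat) (r : R) : z <> 0 -> 0 < r ->
  (z * z)%C = RtoC ((-1) ^ n * r) ->
  exists k : Z, 2 * arg z = INR n * PI + 2 * IZR k * PI.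
Proof.
  intros Hz Hr E.
  destruct (arg_Cmult z z Hz Hz) as [k Hk]. rewrite E in Hk.
  destruct (Nat.Even_or_Odd n) as [[m Hm]|[m Hm]]; subst n.
  - rewrite pow_1_even, arg_nonneg_real in Hk by lra.
    exists (k - Z.of_nat m)%Z. rewrite minus_IZR, <- INR_IZR_INZ, mult_INR. simpl. lra.
  - replace (2 * m + 1)%nat with (S (2 * m)) in Hk by lia.
    rewrite pow_1_odd, arg_neg_real in Hk by lra.
    exists (k - Z.of_nat m)%Z. rewrite minus_IZR, <- INR_IZR_INZ, plus_INR, mult_INR. simpl. lra.
Qed.

Lemma Z_eq_0_of_PI_bound (k : Z) : -2 * PI < 2 * IZR k * PI < 2 * PI -> k = 0%Z.
Proof.
  intros [H1 H2]. pose proof PI_RGT_0.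
  assert (L : (-1 < k)%Z) by (apply lt_IZR; nra).
  assert (U : (k < 1)%Z) by (apply lt_IZR; nra).
  lia.
Qed.

(** No multiple of 2 PI appears, as all four arguments lie in [-PI/2, PI/2]. *)
Lemma arg_prod_right_half_plane (z1 z2 z3 z : C) (r : R) :
  0 < Re z1 -> 0 < Re z2 -> 0 < Re z3 -> 0 <= Re z -> z <> 0 -> 0 < r ->
  (z1 * z2 * z3)%C = (r * z)%C -> arg z1 + arg z2 + arg z3 = arg z.
Proof.
  intros R1 R2 R3 R0 Hz Hr E.
  assert (NZ : forall w : C, 0 < Re w -> w <> 0) by (intros w Hw Z; rewrite Z in Hw; simpl in Hw; lra).
  destruct (arg_Cmult z1 z2) as [k1 K1]; auto.
  destruct (arg_Cmult (z1 * z2)%C z3) as [k2 K2]; auto. apply Cmult_neq_0; auto.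
  rewrite E, arg_scal_pos in K2 by auto.
  pose proof (arg_open_right_half_plane z1 R1). pose proof (arg_open_right_half_plane z2 R2).
  pose proof (arg_open_right_half_plane z3 R3). pose proof (arg_right_half_plane z R0 Hz).
  assert (Ek : (k1 + k2)%Z = 0%Z).
  { apply Z_eq_0_of_PI_bound. rewrite plus_IZR. lra. }
  assert (E2 : IZR k1 * PI + IZR k2 * PI = 0).
  { rewrite <- Rmult_plus_distr_r, <- plus_IZR, Ek. ring. }
  lra.
Qed.

Lemma square_sign_transfer (z q l : C) (n : nat) (r r2 : R) : l <> 0 -> 0 < r -> 0 < r2 ->
  (z * Cconj l)%C = (RtoC ((-1) ^ n * r) * q)%C -> (q * q * (l * l))%C = RtoC ((-1) ^ n * r2) ->
  exists r', 0 < r' /\ (z * z)%C = RtoC ((-1) ^ n * r').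
Proof.
  intros Hl Hr Hr2 Ez Eq. set (N := Cnorm2 l). assert (HN : 0 < N) by (apply Cnorm2_gt_0; auto).
  exists (r * r * r2 / (N * N)). split.
  { apply Rdiv_lt_0_compat; [repeat apply Rmult_lt_0_compat|]; nra. }
  assert (Hsq : (-1) ^ n * (-1) ^ n = 1).
  { rewrite <- Rpow_mult_distr. replace (-1 * -1) with 1 by ring. apply pow1. }
  apply (Cmult_eq_reg_l (RtoC (N * N))).
  - transitivity ((z * Cconj l) * (z * Cconj l) * (l * l))%C.
    { unfold N. rewrite RtoC_mult, <- Cmult_conj_Cnorm2. ring. }
    rewrite Ez. transitivity (RtoC ((-1) ^ n * r) * RtoC ((-1) ^ n * r) * (q * q * (l * l)))%C;
      [ring|].
    rewrite Eq, <- !RtoC_mult. f_equal.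
    transitivity ((-1) ^ n * (-1) ^ n * ((-1) ^ n * (r * r * r2))); [ring|].
    rewrite Hsq. field. lra.
  - intro Z. apply (f_equal fst) in Z. simpl in Z. nra.
Qed.

Lemma exists_conj_twist (s : C) : (s * Cconj s)%C = 1 -> exists w : C, w <> 0 /\ Cconj w = (s * w)%C.
Proof.
  intros Hs. destruct (classic (s = Copp 1)) as [E|N].
  - exists Ci. split; [apply Ci_nz|].
    subst s. unfold Ci, Cconj, Cmult, Copp, RtoC; simpl. f_equal; ring.
  - exists (1 + Cconj s)%C. split.
    + intro Z. apply N. rewrite <- (Cconj_conj s).
      replace (Cconj s) with (Copp 1) by (transitivity ((1 + Cconj s) - 1)%C; [rewrite Z|]; ring).
      rewrite Copp_conj, Cconj_RtoC. reflexivity.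
    + rewrite Cplus_conj, Cconj_conj, Cconj_RtoC.
      transitivity (s + s * Cconj s)%C; [rewrite Hs|]; ring.
Qed.

Lemma Cmult_real_ratio (z1 z2 : C) (p q : R) : p <> 0 -> (z1 * p)%C = (z2 * q)%C -> z1 = ((q / p)%R * z2)%C.
Proof.
  intros Hp E. rewrite RtoC_div by auto.
  replace z1 with (z1 * p / p)%C by (field; intro Z; apply Hp; injection Z; auto).
  rewrite E. field. intro Z; apply Hp; injection Z; auto.
Qed.

Fixpoint sum_upto (f : nat -> R) (m : nat) : R :=
  match m with O => 0 | S k => sum_upto f k + f k end.

Fixpoint prod_upto (f : nat -> C) (m : nat) : C :=
  match m with O => RtoC 1 | S k => (prod_upto f k * f k)%C end.

Lemma sum_upto_ext f g m : (forall j, (j < m)%nat -> f j = g j) -> sum_upto f m = sum_upto g m.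
Proof. induction m; intros E; simpl; auto. rewrite IHm, E; auto. Qed.

Lemma sum_upto_plus f g m : sum_upto (fun j => f j + g j) m = sum_upto f m + sum_upto g m.
Proof. induction m; simpl. ring. rewrite IHm. ring. Qed.

Lemma sum_upto_scal c f m : sum_upto (fun j => c * f j) m = c * sum_upto f m.
Proof. induction m; simpl. ring. rewrite IHm. ring. Qed.

Lemma sum_upto_telescope h m : sum_upto (fun j => h j - h (S j)) m = h O - h m.
Proof. induction m; simpl. ring. rewrite IHm. ring. Qed.

Lemma sum_upto_shift f m : sum_upto f (S m) = f O + sum_upto (fun j => f (S j)) m.
Proof. induction m; simpl in *. ring. rewrite IHm. ring. Qed.

Lemma sum_upto_seq (F : nat -> R) s m :
  fold_right Rplus 0 (map F (seq s m)) = sum_upto (fun j => F (s + j)%nat) m.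
Proof.
  assert (G : forall l x, fold_right Rplus x l = fold_right Rplus 0 l + x).
  { induction l; intros; simpl. ring. rewrite IHl. ring. }
  revert s. induction m; intros s. reflexivity.
  rewrite seq_S, map_app, fold_right_app. simpl. rewrite G, IHm. ring.
Qed.

Lemma prod_upto_neq_0 (f : nat -> C) m : (forall j, (j < m)%nat -> f j <> 0) -> prod_upto f m <> 0.
Proof.
  induction m; intros Hf; simpl.
  - apply C1_nz.
  - apply Cmult_neq_0; [apply IHm|]; intros; apply Hf; lia.
Qed.

Lemma arg_prod_upto (f : nat -> C) m : (forall j, (j < m)%nat -> f j <> 0) ->
  exists k : Z, sum_upto (fun j => arg (f j)) m = arg (prod_upto f m) + 2 * IZR k * PI.
Proof.
  induction m; intros Hf; simpl.
  - exists 0%Z. rewrite arg_nonneg_real; lra.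
  - destruct IHm as [k Hk]; [intros; apply Hf; lia|].
    destruct (arg_Cmult (prod_upto f m) (f m)) as [k' Hk'];
      [apply prod_upto_neq_0; intros; apply Hf; lia | apply Hf; lia |].
    exists (k + k')%Z. rewrite plus_IZR. lra.
Qed.

(** * The hermitian form *)

Definition scal (l : C) (u : vec) : vec := Vec (l * v1 u) (l * v2 u).

Definition det2 (u v : vec) : C := (v1 u * v2 v - v2 u * v1 v)%C.

Definition detm (M : mat) : C := (m11 M * m22 M - m12 M * m21 M)%C.

Definition conj_mat (M : mat) : mat :=
  Mat (Cconj (m11 M)) (Cconj (m12 M)) (Cconj (m21 M)) (Cconj (m22 M)).

Ltac expand_entries :=
  unfold herm, mv, mm, scal, det2, detm, conj_mat, scalar_mat in *; simpl in *;
  repeat rewrite ?Cplus_conj, ?Cmult_conj, ?Cminus_conj, ?Copp_conj, ?Cconj_conj in *.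

Lemma herm_gram2_det (M : mat) (u v : vec) :
  (herm M u u * herm M v v - herm M u v * herm M v u)%C =
  (det2 u v * Cconj (det2 u v) * detm M)%C.
Proof. destruct u, v, M. expand_entries. ring. Qed.

(** The Gram determinant of three vectors of the plane W vanishes. *)
Lemma herm_gram3_det_eq_0 (M : mat) (a b c : vec) :
  let g := herm M in
  (g a a * (g b b * g c c - g b c * g c b) - g a b * (g b a * g c c - g b c * g c a)
   + g a c * (g b a * g c b - g b b * g c a))%C = 0.
Proof. destruct a, b, c, M. simpl. expand_entries. ring. Qed.

Lemma herm_scal_l H l u v : herm H (scal l u) v = (l * herm H u v)%C.
Proof. destruct u, v. expand_entries. ring. Qed.

Lemma herm_scal_r H l u v : herm H u (scal l v) = (Cconj l * herm H u v)%C.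
Proof. destruct u, v. expand_entries. ring. Qed.

Lemma herm_vzero_l H v : herm H vzero v = 0.
Proof. destruct v. unfold vzero. expand_entries. ring. Qed.

Lemma herm_mv_r H M u v : herm H u (mv M v) = herm (mm H (conj_mat M)) u v.
Proof. destruct u, v, H, M. expand_entries. ring. Qed.

Section HermitianForm.

Variable H : mat.
Hypothesis H_herm : hermitian_mat H.

Lemma hermitian_mat_entries : exists (a b : R) (c : C), H = Mat a c (Cconj c) b.
Proof.
  destruct H as [[x1 y1] h12 h21 [x2 y2]]. destruct H_herm as [E1 [E2 E3]].
  unfold Cconj in *; simpl in *. inversion E1. inversion E2. subst h21.
  exists x1, x2, h12. unfold RtoC. repeat f_equal; lra.
Qed.

Lemma herm_conj_sym u v : herm H v u = Cconj (herm H u v).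
Proof.
  destruct hermitian_mat_entries as [a [b [c E]]]. rewrite E.
  destruct u, v. expand_entries. rewrite !Cconj_RtoC. ring.
Qed.

Lemma herm_diag_real u : herm H u u = Re (herm H u u).
Proof. apply Cconj_eq_real, herm_conj_sym. Qed.

Lemma detm_real : detm H = Re (detm H).
Proof.
  destruct hermitian_mat_entries as [a [b [c E]]]. rewrite E.
  apply Cconj_eq_real. expand_entries. rewrite !Cconj_RtoC. ring.
Qed.

Lemma herm_gram_det u v :
  Re (herm H u u) * Re (herm H v v) - Cnorm2 (herm H u v) = Cnorm2 (det2 u v) * Re (detm H).
Proof.
  pose proof (herm_gram2_det H u v) as G.
  rewrite (herm_conj_sym u v), (herm_diag_real u), (herm_diag_real v), detm_real,
    !Cmult_conj_Cnorm2 in G.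
  revert G. generalize (Re (herm H u u)) (Re (herm H v v)) (Cnorm2 (herm H u v))
    (Cnorm2 (det2 u v)) (Re (detm H)).
  intros x y z t d G. apply (f_equal Re) in G. simpl in G. lra.
Qed.

Lemma herm_triple_re a b c :
  2 * Re (herm H a b * herm H b c * herm H c a)%C =
  - (Re (herm H a a) * Re (herm H b b) * Re (herm H c c))
  + Re (herm H a a) * Cnorm2 (herm H b c) + Re (herm H b b) * Cnorm2 (herm H c a)
  + Re (herm H c c) * Cnorm2 (herm H a b).
Proof.
  pose proof (herm_gram3_det_eq_0 H a b c) as G. simpl in G.
  rewrite (herm_conj_sym a b), (herm_conj_sym b c), (herm_conj_sym c a),
    (herm_diag_real a), (herm_diag_real b), (herm_diag_real c) in G.
  revert G. generalize (herm H a b) (herm H b c) (herm H c a)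
    (Re (herm H a a)) (Re (herm H b b)) (Re (herm H c c)).
  intros [x1 x2] [y1 y2] [w1 w2] da db dc G. apply (f_equal fst) in G.
  unfold Cnorm2, Cconj, RtoC, Cmult, Cminus, Cplus, Copp in *; simpl in *. lra.
Qed.

End HermitianForm.

(** * Points of the closed disc *)

Lemma scal_scal l m u : scal l (scal m u) = scal (l * m)%C u.
Proof. destruct u. unfold scal; simpl. f_equal; ring. Qed.

Lemma scal_one u : scal 1 u = u.
Proof. destruct u. unfold scal; simpl. f_equal; ring. Qed.

Lemma scal_zero u : scal 0 u = vzero.
Proof. destruct u. unfold scal, vzero; simpl. f_equal; ring. Qed.

Lemma vec_neq_vzero (u : vec) : u <> vzero <-> (v1 u <> 0 \/ v2 u <> 0).
Proof.
  destruct u as [a b]. unfold vzero; simpl. split.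
  - intros N. destruct (classic (a = 0)); destruct (classic (b = 0)); auto.
    subst; contradiction.
  - intros [N|N] E; inversion E; auto.
Qed.

Lemma scal_neq_vzero (l : C) u : l <> 0 -> u <> vzero -> scal l u <> vzero.
Proof.
  intros Hl Hu. apply vec_neq_vzero in Hu. apply vec_neq_vzero. unfold scal; simpl.
  destruct Hu; [left|right]; apply Cmult_neq_0; auto.
Qed.

Lemma det2_eq_0_scal (a b : vec) : det2 a b = 0 -> a <> vzero -> exists l, b = scal l a.
Proof.
  intros D Ha. apply vec_neq_vzero in Ha. destruct a as [a1 a2], b as [b1 b2].
  unfold det2, scal in *; simpl in *.
  destruct (classic (a1 = 0)) as [E|E].
  - destruct Ha as [|Ha]; [contradiction|]. subst a1.
    exists (b2 / a2)%C. f_equal; [|field; auto].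
    assert (Z : (a2 * b1)%C = 0).
    { replace (a2 * b1)%C with (- ((0 * b2) - a2 * b1))%C by ring. rewrite D. ring. }
    apply Cmult_integral in Z. destruct Z as [|Z]; [contradiction|]. subst. ring.
  - exists (b1 / a1)%C. f_equal; [field; auto|].
    apply (Cmult_eq_reg_l a1); auto. symmetry.
    replace (a1 * b2)%C with ((a1 * b2 - a2 * b1) + a2 * b1)%C by ring.
    rewrite D. field. auto.
Qed.

Lemma exists_det2_neq_0 (x : vec) : x <> vzero -> exists y, det2 x y <> 0.
Proof.
  intros Hx. apply vec_neq_vzero in Hx. destruct x as [x1 x2]; simpl in Hx. unfold det2; simpl.
  destruct Hx as [Hx|Hx].
  - exists (Vec 0 1). simpl. replace (x1 * 1 - x2 * 0)%C with x1 by ring. auto.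
  - exists (Vec 1 0). simpl. replace (x1 * 0 - x2 * 1)%C with (- x2)%C by ring.
    intro Z. apply Hx. transitivity (- - x2)%C; [ring|]. rewrite Z. apply Copp_0.
Qed.

Lemma same_point_scal p q : same_point p q <-> exists l : C, l <> 0 /\ p = scal l q.
Proof. reflexivity. Qed.

Lemma same_point_sym p q : same_point p q -> same_point q p.
Proof.
  rewrite !same_point_scal. intros [l [Hl E]]. exists (/ l)%C. split.
  - intro Z. apply C1_nz. rewrite <- (Cinv_l l Hl), Z. ring.
  - subst p. rewrite scal_scal, Cinv_l, scal_one; auto.
Qed.

Lemma same_point_scal_l (l : C) p q : l <> 0 -> (same_point (scal l p) q <-> same_point p q).
Proof.
  intros Hl. rewrite !same_point_scal. split; intros [m [Hm E]].
  - exists (/ l * m)%C. split.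
    + apply Cmult_neq_0; auto. intro Z. apply C1_nz. rewrite <- (Cinv_l l Hl), Z. ring.
    + rewrite <- scal_scal, <- E, scal_scal, Cinv_l, scal_one; auto.
  - exists (l * m)%C. split. apply Cmult_neq_0; auto. rewrite E, scal_scal; auto.
Qed.

Lemma same_point_scal_r (l : C) p q : l <> 0 -> (same_point p (scal l q) <-> same_point p q).
Proof.
  intros Hl. split; intros E; apply same_point_sym; apply same_point_sym in E;
    [apply (same_point_scal_l l) | apply same_point_scal_l]; auto.
Qed.

Lemma isotropic_pt_scal H (l : C) a : l <> 0 -> (isotropic_pt H (scal l a) <-> isotropic_pt H a).
Proof.
  intros Hl. unfold isotropic_pt. rewrite herm_scal_l, herm_scal_r.
  split; intros [N E].
  - split.
    + intro Z; subst; apply N. unfold scal, vzero; simpl. f_equal; ring.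
    + rewrite Cmult_assoc, Cmult_conj_Cnorm2 in E.
      apply Cmult_integral in E. destruct E as [E|E]; auto.
      exfalso. apply Cnorm2_gt_0 in Hl. inversion E. lra.
  - split. apply scal_neq_vzero; auto. rewrite E. ring.
Qed.

Definition equal_isotropic (H : mat) (x y : vec) : Prop := isotropic_pt H x /\ same_point x y.

Lemma equal_isotropic_sym H x y : equal_isotropic H x y -> equal_isotropic H y x.
Proof.
  intros [I S]. split; [|apply same_point_sym; auto].
  apply same_point_scal in S. destruct S as [l [Hl E]]. subst x.
  apply isotropic_pt_scal in I; auto.
Qed.

Lemma equal_isotropic_scal_l H (l : C) x y : l <> 0 ->
  (equal_isotropic H (scal l x) y <-> equal_isotropic H x y).
Proof. intros Hl. unfold equal_isotropic. rewrite isotropic_pt_scal, same_point_scal_l; tauto. Qed.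

Lemma equal_isotropic_scal_r H (l : C) x y : l <> 0 ->
  (equal_isotropic H x (scal l y) <-> equal_isotropic H x y).
Proof. intros Hl. unfold equal_isotropic. rewrite same_point_scal_r; tauto. Qed.

Lemma negative_not_equal_isotropic_l H o x : negative_pt H o -> ~ equal_isotropic H o x.
Proof. intros [_ N] [[_ I] _]. rewrite I in N. simpl in N. lra. Qed.

Lemma negative_not_equal_isotropic_r H o x : negative_pt H o -> ~ equal_isotropic H x o.
Proof. intros N E. apply equal_isotropic_sym in E. revert E. apply negative_not_equal_isotropic_l; auto. Qed.

Lemma closed_ball_re_le_0 H a : closed_ball_pt H a -> Re (herm H a a) <= 0.
Proof. intros [[_ N]|[_ I]]. lra. rewrite I. simpl. lra. Qed.

Lemma closed_ball_neq_vzero H a : closed_ball_pt H a -> a <> vzero.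
Proof. intros [[N _]|[N _]]; auto. Qed.

Definition triple (H : mat) (a b c : vec) : C := (- (herm H a b * herm H b c * herm H c a))%C.

Lemma triple_cyclic H a b c : triple H b c a = triple H a b c.
Proof. unfold triple. ring. Qed.

Lemma triple_neq_0 H a b c : herm H a b <> 0 -> herm H b c <> 0 -> herm H c a <> 0 ->
  triple H a b c <> 0.
Proof.
  intros Hab Hbc Hca Z. unfold triple in Z.
  apply (Cmult_neq_0 _ _ (Cmult_neq_0 _ _ Hab Hbc) Hca).
  replace (herm H a b * herm H b c * herm H c a)%C
    with (- - (herm H a b * herm H b c * herm H c a))%C by ring.
  rewrite Z. ring.
Qed.

Section SignaturePM.

Variable H : mat.
Hypothesis H_sig : signature_pm H.
Let H_herm : hermitian_mat H := proj1 H_sig.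

Lemma detm_neg : Re (detm H) < 0.
Proof.
  pose proof H_sig as [_ [[u Hu] [v Hv]]]. pose proof (herm_gram_det H H_herm u v).
  pose proof (Cnorm2_ge_0 (herm H u v)). pose proof (Cnorm2_ge_0 (det2 u v)).
  destruct (Rlt_dec (Re (detm H)) 0); auto. nra.
Qed.

Lemma exists_negative_pt : exists o, negative_pt H o.
Proof.
  pose proof H_sig as [_ [_ [v Hv]]]. exists v. split; auto. intro Z. subst v.
  rewrite herm_vzero_l in Hv. simpl in Hv. lra.
Qed.

Lemma herm_reverse_cauchy_schwarz u v : Re (herm H u u) <= 0 -> Re (herm H v v) <= 0 ->
  Re (herm H u u) * Re (herm H v v) <= Cnorm2 (herm H u v).
Proof.
  intros Hu Hv. pose proof (herm_gram_det H H_herm u v). pose proof detm_neg.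
  pose proof (Cnorm2_ge_0 (det2 u v)). nra.
Qed.

Lemma herm_neq_0 a b : closed_ball_pt H a -> closed_ball_pt H b ->
  ~ equal_isotropic H a b -> herm H a b <> 0.
Proof.
  intros Ha Hb NE Z. pose proof (herm_gram_det H H_herm a b) as G. pose proof detm_neg.
  rewrite Z, Cnorm2_RtoC_0 in G.
  pose proof (closed_ball_re_le_0 H a Ha). pose proof (closed_ball_re_le_0 H b Hb).
  pose proof (Cnorm2_ge_0 (det2 a b)).
  assert (D : Cnorm2 (det2 a b) = 0) by nra. apply Cnorm2_eq_0 in D.
  destruct (det2_eq_0_scal a b D (closed_ball_neq_vzero H a Ha)) as [l El]. subst b.
  assert (Hl : l <> 0).
  { intro Z'. subst l. apply (closed_ball_neq_vzero H _ Hb). apply scal_zero. }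
  rewrite herm_scal_r in Z. apply Cmult_integral in Z. destruct Z as [Z|Z].
  - apply Hl. rewrite <- (Cconj_conj l), Z. apply Cconj_RtoC.
  - apply NE. split.
    + split. apply (closed_ball_neq_vzero H a Ha).
      rewrite (herm_diag_real H H_herm a) in *.
      assert (E : Re (herm H a a) = 0) by (apply (f_equal fst) in Z; exact Z).
      rewrite E. reflexivity.
    + apply same_point_sym. exists l. auto.
Qed.

Lemma triple_re_nonneg a b c : closed_ball_pt H a -> closed_ball_pt H b -> closed_ball_pt H c ->
  0 <= Re (triple H a b c).
Proof.
  intros Ha Hb Hc. apply closed_ball_re_le_0 in Ha, Hb, Hc.
  pose proof (herm_triple_re H H_herm a b c) as G.
  pose proof (herm_reverse_cauchy_schwarz a b Ha Hb).
  pose proof (herm_reverse_cauchy_schwarz b c Hb Hc).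
  pose proof (herm_reverse_cauchy_schwarz c a Hc Ha).
  unfold triple. rewrite re_opp.
  revert G. generalize (Re (herm H a b * herm H b c * herm H c a)%C). intros P G.
  assert (Re (herm H a a) * Re (herm H b b) * Re (herm H c c) <= 0) by
    (assert (0 <= Re (herm H a a) * Re (herm H b b)) by nra; nra).
  nra.
Qed.

Lemma triple_re_pos a b c : negative_pt H a -> closed_ball_pt H b -> closed_ball_pt H c ->
  herm H b c <> 0 -> 0 < Re (triple H a b c).
Proof.
  intros [_ Ha] Hb Hc Hbc. apply closed_ball_re_le_0 in Hb, Hc. apply Cnorm2_gt_0 in Hbc.
  pose proof (herm_triple_re H H_herm a b c) as G.
  pose proof (herm_reverse_cauchy_schwarz a b (Rlt_le _ _ Ha) Hb).
  pose proof (herm_reverse_cauchy_schwarz b c Hb Hc).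
  pose proof (herm_reverse_cauchy_schwarz c a Hc (Rlt_le _ _ Ha)).
  unfold triple. rewrite re_opp.
  revert G. generalize (Re (herm H a b * herm H b c * herm H c a)%C). intros P G.
  assert (0 <= Re (herm H b b) * Re (herm H c c)) by nra.
  destruct (Rlt_dec 0 (Re (herm H b b) * Re (herm H c c))); nra.
Qed.

End SignaturePM.

(** * Oriented areas of triangles *)

Lemma area_tri_degenerate H a b c : two_equal_isotropic H a b c -> area_tri H a b c = 0.
Proof.
  intros D. unfold area_tri. destruct (excluded_middle_informative _) as [|N]; auto. contradiction.
Qed.

Lemma area_tri_arg H a b c : ~ two_equal_isotropic H a b c ->
  area_tri H a b c = 2 * arg (triple H a b c).
Proof.
  intros D. unfold area_tri. destruct (excluded_middle_informative _); auto. contradiction.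
Qed.

Lemma area_tri_cyclic H a b c : area_tri H b c a = area_tri H a b c.
Proof.
  destruct (classic (two_equal_isotropic H a b c)) as [D|D].
  - rewrite !area_tri_degenerate; auto. unfold two_equal_isotropic in *. tauto.
  - rewrite !area_tri_arg, triple_cyclic; auto. unfold two_equal_isotropic in *. tauto.
Qed.

Lemma area_tri_scal_l H (l : C) a b c : l <> 0 -> area_tri H (scal l a) b c = area_tri H a b c.
Proof.
  intros Hl. assert (D : two_equal_isotropic H (scal l a) b c <-> two_equal_isotropic H a b c).
  { pose proof (equal_isotropic_scal_l H l a b Hl). pose proof (equal_isotropic_scal_r H l c a Hl).
    unfold two_equal_isotropic, equal_isotropic in *. tauto. }
  destruct (classic (two_equal_isotropic H a b c)) as [N|N].
  - rewrite !area_tri_degenerate; tauto.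
  - rewrite !area_tri_arg by tauto.
    replace (triple H (scal l a) b c) with (Cnorm2 l * triple H a b c)%C.
    + rewrite arg_scal_pos; auto. apply Cnorm2_gt_0; auto.
    + unfold triple. rewrite herm_scal_l, herm_scal_r, <- Cmult_conj_Cnorm2. ring.
Qed.

Lemma area_tri_scal_m H (l : C) a b c : l <> 0 -> area_tri H a (scal l b) c = area_tri H a b c.
Proof. intros. rewrite <- (area_tri_cyclic H a), <- (area_tri_cyclic H a b). apply area_tri_scal_l; auto. Qed.

Lemma area_tri_scal_r H (l : C) a b c : l <> 0 -> area_tri H a b (scal l c) = area_tri H a b c.
Proof. intros. rewrite (area_tri_cyclic H (scal l c)), (area_tri_cyclic H c). apply area_tri_scal_l; auto. Qed.

Lemma area_tri_repeat H o a : hermitian_mat H -> Re (herm H a a) <= 0 -> area_tri H o a a = 0.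
Proof.
  intros HH Ha. destruct (classic (two_equal_isotropic H o a a)) as [D|D].
  - apply area_tri_degenerate; auto.
  - rewrite area_tri_arg by auto.
    replace (triple H o a a) with (RtoC (- Re (herm H a a) * Cnorm2 (herm H o a))).
    { rewrite arg_nonneg_real. ring. pose proof (Cnorm2_ge_0 (herm H o a)). nra. }
    pose proof (herm_diag_real H HH a) as Ea. set (d := Re (herm H a a)) in *.
    unfold triple. rewrite RtoC_mult, RtoC_opp, <- Cmult_conj_Cnorm2, (herm_conj_sym H HH o a), Ea.
    ring.
Qed.

Lemma triple_cocycle H o a b c : hermitian_mat H ->
  (triple H o a b * triple H o b c * triple H o c a)%C =
  (RtoC (Cnorm2 (herm H o a) * Cnorm2 (herm H o b) * Cnorm2 (herm H o c)) * triple H a b c)%C.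
Proof.
  intros HH. unfold triple. rewrite !RtoC_mult.
  rewrite (herm_conj_sym H HH o a), (herm_conj_sym H HH o b), (herm_conj_sym H HH o c),
    <- !Cmult_conj_Cnorm2. ring.
Qed.

Section AreaSignaturePM.

Variable H : mat.
Hypothesis H_sig : signature_pm H.
Let H_herm : hermitian_mat H := proj1 H_sig.

Lemma area_tri_swap a b c : closed_ball_pt H a -> closed_ball_pt H b -> closed_ball_pt H c ->
  area_tri H a c b = - area_tri H a b c.
Proof.
  intros Ha Hb Hc.
  assert (D : two_equal_isotropic H a c b <-> two_equal_isotropic H a b c).
  { pose proof (equal_isotropic_sym H a b). pose proof (equal_isotropic_sym H b c).
    pose proof (equal_isotropic_sym H c a). pose proof (equal_isotropic_sym H b a).
    pose proof (equal_isotropic_sym H c b). pose proof (equal_isotropic_sym H a c).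
    unfold two_equal_isotropic, equal_isotropic in *. tauto. }
  destruct (classic (two_equal_isotropic H a b c)) as [N|N].
  - rewrite (area_tri_degenerate H a c b), (area_tri_degenerate H a b c) by tauto. lra.
  - rewrite !area_tri_arg by tauto.
    replace (triple H a c b) with (Cconj (triple H a b c)).
    + rewrite arg_conj by (apply triple_re_nonneg; auto). ring.
    + unfold triple. rewrite Copp_conj, !Cmult_conj, (herm_conj_sym H H_herm a c),
        (herm_conj_sym H H_herm c b), (herm_conj_sym H H_herm b a), !Cconj_conj. ring.
Qed.

Lemma area_tri_cocycle_degenerate o a b c : negative_pt H o ->
  closed_ball_pt H a -> closed_ball_pt H b -> closed_ball_pt H c -> equal_isotropic H a b ->
  area_tri H a b c = 0 /\ area_tri H o a b + area_tri H o b c + area_tri H o c a = 0.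
Proof.
  intros Ho Ha Hb Hc E. split; [apply area_tri_degenerate; left; auto|].
  rewrite (area_tri_degenerate H o a b) by (right; left; auto).
  destruct E as [_ S]. apply same_point_scal in S. destruct S as [l [Hl El]].
  fold (scal l b) in El. rewrite El, area_tri_scal_r, area_tri_swap by (auto; left; auto). ring.
Qed.

Lemma area_tri_cocycle o a b c : negative_pt H o ->
  closed_ball_pt H a -> closed_ball_pt H b -> closed_ball_pt H c ->
  area_tri H a b c = area_tri H o a b + area_tri H o b c + area_tri H o c a.
Proof.
  intros Ho Ha Hb Hc.
  destruct (classic (equal_isotropic H a b)) as [E|Nab].
  { destruct (area_tri_cocycle_degenerate o a b c Ho Ha Hb Hc E). lra. }
  destruct (classic (equal_isotropic H b c)) as [E|Nbc].
  { destruct (area_tri_cocycle_degenerate o b c a Ho Hb Hc Ha E). rewrite <- area_tri_cyclic. lra. }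
  destruct (classic (equal_isotropic H c a)) as [E|Nca].
  { destruct (area_tri_cocycle_degenerate o c a b Ho Hc Ha Hb E). rewrite area_tri_cyclic. lra. }
  assert (Ob : closed_ball_pt H o) by (left; auto).
  assert (NO : forall x, ~ equal_isotropic H o x /\ ~ equal_isotropic H x o)
    by (split; [apply negative_not_equal_isotropic_l | apply negative_not_equal_isotropic_r]; auto).
  assert (Hoa := herm_neq_0 H H_sig o a Ob Ha (proj1 (NO a))).
  assert (Hob := herm_neq_0 H H_sig o b Ob Hb (proj1 (NO b))).
  assert (Hoc := herm_neq_0 H H_sig o c Ob Hc (proj1 (NO c))).
  rewrite !area_tri_arg by (unfold two_equal_isotropic; firstorder).
  rewrite <- !Rmult_plus_distr_l. f_equal. symmetry.
  eapply arg_prod_right_half_plane; [ | | | | | | apply triple_cocycle; exact H_herm].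
  - apply triple_re_pos; auto. apply herm_neq_0; auto.
  - apply triple_re_pos; auto. apply herm_neq_0; auto.
  - apply triple_re_pos; auto. apply herm_neq_0; auto.
  - apply triple_re_nonneg; auto.
  - apply triple_neq_0; apply herm_neq_0; auto.
  - pose proof (Cnorm2_gt_0 _ Hoa). pose proof (Cnorm2_gt_0 _ Hob). pose proof (Cnorm2_gt_0 _ Hoc).
    repeat apply Rmult_lt_0_compat; auto.
Qed.

End AreaSignaturePM.

(** * Unitary maps and involutions *)

Definition vsub (x y : vec) : vec := Vec (v1 x - v1 y) (v2 x - v2 y).

Lemma mv_mm A B u : mv (mm A B) u = mv A (mv B u).
Proof. destruct u. expand_entries. f_equal; ring. Qed.

Lemma mv_scalar_mat l u : mv (scalar_mat l) u = scal l u.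
Proof. destruct u. expand_entries. f_equal; ring. Qed.

Lemma mv_scal M l u : mv M (scal l u) = scal l (mv M u).
Proof. destruct u. expand_entries. f_equal; ring. Qed.

Lemma mv_vsub M x y : mv M (vsub x y) = vsub (mv M x) (mv M y).
Proof. destruct x, y. unfold vsub. expand_entries. f_equal; ring. Qed.

Lemma mv_vzero M : mv M vzero = vzero.
Proof. unfold vzero. expand_entries. f_equal; ring. Qed.

Lemma vsub_eq_vzero x y : vsub x y = vzero -> x = y.
Proof.
  destruct x as [a b], y as [c d]. unfold vsub, vzero. intros E.
  pose proof (f_equal v1 E) as E1. pose proof (f_equal v2 E) as E2. cbn [v1 v2] in E1, E2.
  f_equal.
  - transitivity ((a - c) + c)%C; [ring | rewrite E1; ring].
  - transitivity ((b - d) + d)%C; [ring | rewrite E2; ring].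
Qed.

Lemma detm_mm A B : detm (mm A B) = (detm A * detm B)%C.
Proof. destruct A, B. expand_entries. ring. Qed.

Lemma detm_scalar_mat l : detm (scalar_mat l) = (l * l)%C.
Proof. expand_entries. ring. Qed.

Lemma detm_conj_mat M : detm (conj_mat M) = Cconj (detm M).
Proof. destruct M. expand_entries. reflexivity. Qed.

Section Unitary.

Variable H : mat.
Hypothesis H_sig : signature_pm H.
Variable J : mat.
Hypothesis J_unit : unitary H J.

Lemma unitary_mv_neq_vzero u : u <> vzero -> mv J u <> vzero.
Proof.
  intros Hu E. apply Hu.
  assert (D : forall w, det2 u w = 0).
  { intros w. pose proof (herm_gram_det H (proj1 H_sig) u w) as G. pose proof (detm_neg H H_sig).
    rewrite <- (J_unit u u), <- (J_unit u w), E, !herm_vzero_l, Cnorm2_RtoC_0 in G.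
    rewrite re_RtoC, Rmult_0_l, Rminus_0_r in G.
    apply Cnorm2_eq_0. nra. }
  pose proof (D (Vec 1 0)) as D1. pose proof (D (Vec 0 1)) as D2.
  destruct u as [u1 u2]. unfold det2, vzero in *; simpl in *. f_equal.
  - rewrite <- D2. ring.
  - rewrite <- (Copp_0), <- D1. ring.
Qed.

Lemma unitary_mv_inj x y : mv J x = mv J y -> x = y.
Proof.
  intros E. apply vsub_eq_vzero. destruct (classic (vsub x y = vzero)) as [|N]; auto.
  exfalso. apply (unitary_mv_neq_vzero _ N). rewrite mv_vsub, E.
  unfold vsub, vzero. f_equal; ring.
Qed.

Lemma unitary_closed_ball u : closed_ball_pt H u -> closed_ball_pt H (mv J u).
Proof.
  intros [[N E]|[N E]]; [left|right]; (split; [apply unitary_mv_neq_vzero; auto | rewrite J_unit; auto]).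
Qed.

Lemma unitary_negative u : negative_pt H u -> negative_pt H (mv J u).
Proof. intros [N E]; split; [apply unitary_mv_neq_vzero; auto | rewrite J_unit; auto]. Qed.

Lemma equal_isotropic_unitary x y : equal_isotropic H (mv J x) (mv J y) <-> equal_isotropic H x y.
Proof.
  unfold equal_isotropic, isotropic_pt. rewrite !same_point_scal, J_unit. split.
  - intros [[N I] [l [Hl E]]]. split.
    + split; auto. intro Z. apply N. rewrite Z. apply mv_vzero.
    + exists l. split; auto. apply unitary_mv_inj. rewrite E, mv_scal. reflexivity.
  - intros [[N I] [l [Hl E]]]. split.
    + split; auto. apply unitary_mv_neq_vzero; auto.
    + exists l. split; auto. rewrite E, mv_scal. reflexivity.
Qed.

Lemma area_tri_unitary x y z : area_tri H (mv J x) (mv J y) (mv J z) = area_tri H x y z.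
Proof.
  assert (D : two_equal_isotropic H (mv J x) (mv J y) (mv J z) <-> two_equal_isotropic H x y z).
  { pose proof (equal_isotropic_unitary x y). pose proof (equal_isotropic_unitary y z).
    pose proof (equal_isotropic_unitary z x).
    unfold two_equal_isotropic, equal_isotropic in *. tauto. }
  destruct (classic (two_equal_isotropic H x y z)) as [N|N].
  - rewrite !area_tri_degenerate; tauto.
  - rewrite !area_tri_arg by tauto. unfold triple. rewrite !J_unit. reflexivity.
Qed.

End Unitary.

Lemma involution_detm (J : mat) (s : C) : mm J J = scalar_mat s -> ~ is_scalar J ->
  detm J = (- s)%C.
Proof.
  intros E NS. destruct J as [a b c d]. unfold mm, scalar_mat in E; cbn [m11 m12 m21 m22] in E.
  pose proof (f_equal m11 E) as E1. pose proof (f_equal m12 E) as E2.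
  pose proof (f_equal m21 E) as E3. pose proof (f_equal m22 E) as E4.
  cbn [m11 m12 m21 m22] in E1, E2, E3, E4. clear E. unfold detm; cbn [m11 m12 m21 m22].
  assert (Tr : (a + d)%C = 0).
  { destruct (classic ((a + d)%C = 0)) as [|N]; auto. exfalso. apply NS.
    assert (Hb : b = 0).
    { apply (Cmult_eq_reg_l (a + d)%C); auto. rewrite Cmult_0_r, <- E2. ring. }
    assert (Hc : c = 0).
    { apply (Cmult_eq_reg_l (a + d)%C); auto. rewrite Cmult_0_r, <- E3. ring. }
    subst b c. exists a. unfold scalar_mat. f_equal.
    assert (Z : ((a + d) * (a - d))%C = 0).
    { transitivity ((a * a + 0 * 0) - (0 * 0 + d * d))%C; [ring|]. rewrite E1, E4. ring. }
    apply Cmult_integral in Z. destruct Z as [Z|Z]; [contradiction|].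
    symmetry. transitivity ((a - d) + d)%C; [ring | rewrite Z; ring]. }
  replace d with (- a)%C by (transitivity ((a + d) - a)%C; [rewrite Tr; ring | ring]).
  rewrite <- E1. ring.
Qed.

(** If [J^2 = s] with [|s| = 1] and [Cconj w = s w], this form is hermitian, and its Gram
    determinant [- |w|^2 |det2 a b|^2 det H] is positive for independent [a], [b]: it is definite. *)
Definition twisted_form (H J : mat) (w : C) (a b : vec) : C := (Cconj w * herm H a (mv J b))%C.

Section Involution.

Variable H : mat.
Hypothesis H_sig : signature_pm H.
Let H_herm : hermitian_mat H := proj1 H_sig.
Variables (J : mat) (s : C).
Hypothesis J_unit : unitary H J.
Hypothesis J_sq : mm J J = scalar_mat s.

Lemma mv_involution u : mv J (mv J u) = scal s u.
Proof. rewrite <- mv_mm, J_sq, mv_scalar_mat. reflexivity. Qed.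

Lemma involution_factor_unimodular : (s * Cconj s)%C = 1.
Proof.
  pose proof H_sig as [_ [_ [v Hv]]].
  assert (G : herm H (scal s v) (scal s v) = herm H v v).
  { rewrite <- !mv_involution, !J_unit. reflexivity. }
  rewrite herm_scal_l, herm_scal_r in G.
  apply (Cmult_eq_reg_l (herm H v v)); [|intro Z; rewrite Z in Hv; simpl in Hv; lra].
  transitivity (s * (Cconj s * herm H v v))%C; [ring|]. rewrite G. ring.
Qed.

Lemma herm_involution a b : herm H (mv J b) a = (s * herm H b (mv J a))%C.
Proof. rewrite <- (J_unit (mv J b) a), mv_involution. apply herm_scal_l. Qed.

Hypothesis J_nonscalar : ~ is_scalar J.

Section Twist.

Variable w : C.
Hypothesis w_neq_0 : w <> 0.
Hypothesis w_twist : Cconj w = (s * w)%C.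

Lemma twisted_form_conj_sym a b : twisted_form H J w b a = Cconj (twisted_form H J w a b).
Proof.
  unfold twisted_form. rewrite Cmult_conj, Cconj_conj, <- (herm_conj_sym H H_herm a (mv J b)),
    herm_involution, w_twist. ring.
Qed.

Lemma twisted_form_diag_real a : twisted_form H J w a a = Re (twisted_form H J w a a).
Proof. apply Cconj_eq_real, twisted_form_conj_sym. Qed.

Lemma twisted_form_gram_det a b :
  Re (twisted_form H J w a a) * Re (twisted_form H J w b b) - Cnorm2 (twisted_form H J w a b) =
  - (Cnorm2 w * Cnorm2 (det2 a b) * Re (detm H)).
Proof.
  set (M := mm H (conj_mat J)).
  assert (G : (twisted_form H J w a a * twisted_form H J w b b
               - twisted_form H J w a b * twisted_form H J w b a)%C =
              (- (w * Cconj w * (det2 a b * Cconj (det2 a b)) * detm H))%C).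
  { unfold twisted_form. rewrite !herm_mv_r. fold M.
    transitivity (Cconj w * Cconj w * (herm M a a * herm M b b - herm M a b * herm M b a))%C;
      [ring|].
    unfold M. rewrite herm_gram2_det, detm_mm, detm_conj_mat, (involution_detm J s J_sq J_nonscalar),
      Copp_conj.
    transitivity (- (Cconj w * (s * w) * Cconj s * (det2 a b * Cconj (det2 a b) * detm H)))%C;
      [rewrite <- w_twist; ring|].
    transitivity (- (Cconj w * w * (s * Cconj s) * (det2 a b * Cconj (det2 a b) * detm H)))%C;
      [ring|].
    rewrite involution_factor_unimodular. ring. }
  rewrite (twisted_form_conj_sym a b), (twisted_form_diag_real a), (twisted_form_diag_real b),
    !Cmult_conj_Cnorm2, (detm_real H H_herm) in G.
  revert G. generalize (Re (twisted_form H J w a a)) (Re (twisted_form H J w b b))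
    (Cnorm2 (twisted_form H J w a b)) (Cnorm2 w) (Cnorm2 (det2 a b)) (Re (detm H)).
  intros x y z t u v G. apply (f_equal fst) in G. simpl in G. lra.
Qed.

Lemma twisted_form_diag_neq_0 a : a <> vzero -> Re (twisted_form H J w a a) <> 0.
Proof.
  intros Ha Z. destruct (exists_det2_neq_0 a Ha) as [b Hb].
  pose proof (twisted_form_gram_det a b) as G. rewrite Z in G.
  pose proof (Cnorm2_gt_0 _ Hb). pose proof (Cnorm2_gt_0 _ w_neq_0).
  pose proof (Cnorm2_ge_0 (twisted_form H J w a b)). pose proof (detm_neg H H_sig).
  assert (0 < Cnorm2 w * Cnorm2 (det2 a b)) by (apply Rmult_lt_0_compat; auto). nra.
Qed.

Lemma twisted_form_definite a b : a <> vzero -> b <> vzero ->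
  0 < Re (twisted_form H J w a a) * Re (twisted_form H J w b b).
Proof.
  intros Ha Hb. pose proof (twisted_form_gram_det a b) as G.
  pose proof (twisted_form_diag_neq_0 a Ha). pose proof (twisted_form_diag_neq_0 b Hb).
  pose proof (Cnorm2_ge_0 (twisted_form H J w a b)). pose proof (Cnorm2_ge_0 (det2 a b)).
  pose proof (Cnorm2_gt_0 _ w_neq_0). pose proof (detm_neg H H_sig).
  assert (0 <= Cnorm2 w * Cnorm2 (det2 a b)) by (apply Rmult_le_pos; lra).
  assert (P : 0 <= Re (twisted_form H J w a a) * Re (twisted_form H J w b b)) by nra.
  destruct (Rle_lt_or_eq_dec _ _ P) as [|Z]; auto.
  symmetry in Z. apply Rmult_integral in Z. destruct Z; contradiction.
Qed.

Lemma triple_involution o a :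
  (triple H o a (mv J a) * twisted_form H J w o o)%C =
  (triple H o a (mv J o) * twisted_form H J w a a)%C.
Proof.
  pose proof (twisted_form_conj_sym o o) as PR. unfold twisted_form in *.
  rewrite Cmult_conj, Cconj_conj in PR. unfold triple.
  rewrite (herm_involution o a), (herm_conj_sym H H_herm o (mv J o)).
  set (X := herm H o (mv J o)) in *.
  transitivity (- (herm H o a * herm H a (mv J a) * herm H a (mv J o)) * (s * (Cconj w * X)))%C;
    [ring|].
  rewrite PR.
  transitivity (- (herm H o a * herm H a (mv J a) * herm H a (mv J o)) * ((s * w) * Cconj X))%C;
    [ring|].
  rewrite <- w_twist. ring.
Qed.

End Twist.

Lemma involution_no_fixed_isotropic a : closed_ball_pt H a -> ~ equal_isotropic H a (mv J a).
Proof.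
  intros Ha [[_ I] S]. destruct (exists_conj_twist s involution_factor_unimodular) as [w [Hw0 Hw]].
  apply (twisted_form_diag_neq_0 w Hw0 Hw a (closed_ball_neq_vzero H a Ha)).
  apply same_point_sym in S. destruct S as [l [_ El]]. fold (scal l a) in El.
  unfold twisted_form. rewrite El, herm_scal_r, I, !Cmult_0_r. reflexivity.
Qed.

Lemma area_tri_involution o a : negative_pt H o -> closed_ball_pt H a ->
  area_tri H o a (mv J a) = area_tri H o a (mv J o).
Proof.
  intros Ho Ha. destruct (exists_conj_twist s involution_factor_unimodular) as [w [Hw0 Hw]].
  pose proof (twisted_form_definite w Hw0 Hw o a (proj1 Ho) (closed_ball_neq_vzero H a Ha)) as PP.
  assert (Po : Re (twisted_form H J w o o) <> 0) by (intro Z; rewrite Z in PP; lra).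
  assert (HJo := unitary_negative H H_sig J J_unit o Ho).
  rewrite !area_tri_arg.
  - f_equal. rewrite (Cmult_real_ratio _ (triple H o a (mv J o))
      (Re (twisted_form H J w o o)) (Re (twisted_form H J w a a))); auto.
    + apply arg_scal_pos.
      replace (Re (twisted_form H J w a a) / Re (twisted_form H J w o o)) with
        (Re (twisted_form H J w o o) * Re (twisted_form H J w a a)
         / (Re (twisted_form H J w o o) * Re (twisted_form H J w o o))) by (field; auto).
      apply Rdiv_lt_0_compat; nra.
    + rewrite <- !twisted_form_diag_real by auto. apply triple_involution; auto.
  - intros [D|[D|D]]; revert D.
    + apply negative_not_equal_isotropic_l; auto.
    + apply negative_not_equal_isotropic_r; auto.
    + apply negative_not_equal_isotropic_l; auto.
  - intros [D|[D|D]]; revert D.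
    + apply negative_not_equal_isotropic_l; auto.
    + apply involution_no_fixed_isotropic; auto.
    + apply negative_not_equal_isotropic_r; auto.
Qed.

Lemma involution_sign a : a <> vzero ->
  exists r, 0 < r /\ (herm H a (mv J a) * herm H a (mv J a) * detm J)%C = RtoC (- r).
Proof.
  intros Ha. destruct (exists_conj_twist s involution_factor_unimodular) as [w [Hw0 Hw]].
  pose proof (twisted_form_definite w Hw0 Hw a a Ha Ha) as PP.
  pose proof (twisted_form_diag_real w Hw a) as PR. pose proof (Cnorm2_gt_0 w Hw0) as Wp.
  set (phi := Re (twisted_form H J w a a)) in *.
  exists (phi * phi / Cnorm2 w). split; [apply Rdiv_lt_0_compat; auto|].
  rewrite (involution_detm J s J_sq J_nonscalar). unfold twisted_form in PR.
  set (h := herm H a (mv J a)) in *.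
  apply (Cmult_eq_reg_l (w * Cconj w)%C).
  - transitivity (- ((Cconj w * h) * ((s * w) * h)))%C; [ring|].
    rewrite <- Hw, PR, Cmult_conj_Cnorm2. clearbody phi h. clear PR.
    unfold RtoC, Cmult, Copp; simpl. f_equal; field; lra.
  - rewrite Cmult_conj_Cnorm2. intro Z. apply (f_equal fst) in Z. simpl in Z. lra.
Qed.

End Involution.

Lemma area_tri_involution_quad H J o a b : signature_pm H -> unitary H J -> is_scalar (mm J J) ->
  negative_pt H o -> closed_ball_pt H a -> closed_ball_pt H b ->
  area_tri H o a (mv J a) + area_tri H o (mv J a) (mv J b) + area_tri H o (mv J b) b
  + area_tri H o b a = 0.
Proof.
  intros HS HU [s E] Ho Ha Hb.
  assert (Ob : closed_ball_pt H o) by (left; auto).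
  destruct (classic (is_scalar J)) as [[mu Em]|NS].
  - assert (Sm : forall x, mv J x = scal mu x) by (intros; rewrite Em; apply mv_scalar_mat).
    assert (Hmu : mu <> 0).
    { intro Z. apply (unitary_mv_neq_vzero H HS J HU a (closed_ball_neq_vzero H a Ha)).
      rewrite Sm, Z. apply scal_zero. }
    rewrite !Sm, area_tri_scal_r, area_tri_scal_m, area_tri_scal_r, area_tri_scal_m by auto.
    rewrite (area_tri_repeat H o a (proj1 HS) (closed_ball_re_le_0 H a Ha)),
      (area_tri_repeat H o b (proj1 HS) (closed_ball_re_le_0 H b Hb)),
      (area_tri_swap H HS o a b Ob Ha Hb).
    ring.
  - pose proof (involution_factor_unimodular H HS J s HU E) as Hs.
    assert (Hs0 : s <> 0) by (intro Z; rewrite Z, Cmult_0_l in Hs; apply C1_nz; auto).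
    assert (HJo : closed_ball_pt H (mv J o)) by (apply unitary_closed_ball; auto).
    assert (HJb : closed_ball_pt H (mv J b)) by (apply unitary_closed_ball; auto).
    rewrite <- (area_tri_unitary H HS J HU o (mv J a) (mv J b)),
      !(mv_involution J s E), area_tri_scal_m, area_tri_scal_r by auto.
    rewrite (area_tri_cocycle H HS o (mv J o) a b Ho HJo Ha Hb),
      (area_tri_swap H HS o a (mv J o) Ob Ha HJo),
      <- (area_tri_involution H HS J s HU E NS o a Ho Ha),
      <- (area_tri_involution H HS J s HU E NS o b Ho Hb),
      (area_tri_swap H HS o b (mv J b) Ob Hb HJb),
      (area_tri_swap H HS o a b Ob Ha Hb).
    ring.
Qed.

(** * Areas of orbits *)

Definition fan_area (H : mat) (c : vec) (x : nat -> vec) (m : nat) : R :=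
  sum_upto (fun j => area_tri H c (x j) (x (S j))) m.

Lemma area_poly_fan_area H c (x : nat -> vec) (m : nat) (l : C) : (1 <= m)%nat -> l <> 0 ->
  x m = scal l (x O) -> area_poly H c x m = fan_area H c x m.
Proof.
  intros Hm Hl Ex. destruct m as [|m]; [lia|]. unfold area_poly, fan_area.
  rewrite sum_upto_seq, (sum_upto_shift (fun j => area_tri H c (x j) (x (S j)))).
  change (sum_upto ?f (S m)) with (sum_upto f m + f m). cbv beta. cbn [Nat.add].
  rewrite Nat.eqb_refl, Ex, area_tri_scal_m by auto.
  rewrite Rplus_comm. f_equal. apply sum_upto_ext. intros j Hj.
  replace (Nat.eqb (S j) (S m)) with false by (symmetry; apply Nat.eqb_neq; lia). reflexivity.
Qed.

Lemma fan_area_center H c o (x : nat -> vec) (m : nat) (l : C) : signature_pm H ->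
  negative_pt H o -> closed_ball_pt H c -> (forall j, (j <= m)%nat -> closed_ball_pt H (x j)) ->
  l <> 0 -> x m = scal l (x O) -> fan_area H c x m = fan_area H o x m.
Proof.
  intros HS Ho Hc Hx Hl Ex. assert (Ob : closed_ball_pt H o) by (left; auto).
  unfold fan_area.
  transitivity (sum_upto (fun j => area_tri H o (x j) (x (S j)) +
      (area_tri H o c (x j) - area_tri H o c (x (S j)))) m).
  - apply sum_upto_ext. intros j Hj.
    rewrite (area_tri_cocycle H HS o c (x j) (x (S j))), (area_tri_swap H HS o c (x (S j)));
      auto with arith. ring.
  - rewrite sum_upto_plus, (sum_upto_telescope (fun j => area_tri H o c (x j))), Ex,
      area_tri_scal_r by auto. ring.
Qed.

Lemma fan_area_negative H o (x : nat -> vec) m : negative_pt H o ->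
  (forall j, (j <= m)%nat -> negative_pt H (x j)) ->
  fan_area H o x m = 2 * sum_upto (fun j => arg (triple H o (x j) (x (S j)))) m.
Proof.
  intros Ho Hx. unfold fan_area. rewrite <- sum_upto_scal. apply sum_upto_ext. intros j Hj.
  apply area_tri_arg. intros [D|[D|D]]; revert D; apply negative_not_equal_isotropic_l; auto with arith.
Qed.

Lemma orbit_pts_prod_lifts Rl p k : orbit_pts Rl p k = mv (prod_lifts Rl k) p.
Proof.
  induction k; simpl.
  - rewrite mv_scalar_mat, scal_one. reflexivity.
  - rewrite IHk, mv_mm. reflexivity.
Qed.

(** Consecutive triple products share the factor [<o, x j> <x j, o> = |<o, x j>|^2]. *)
Lemma prod_triple_fan H o (x : nat -> vec) m : hermitian_mat H ->
  (forall j, (j <= m)%nat -> herm H o (x j) <> 0) ->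
  exists r, 0 < r /\
  (prod_upto (fun j => triple H o (x j) (x (S j))) m * herm H o (x m))%C =
  (RtoC ((-1) ^ m * r) * herm H o (x O) * prod_upto (fun j => herm H (x j) (x (S j))) m)%C.
Proof.
  intros HH. induction m; intros Hz.
  - exists 1. split; [lra|]. simpl. rewrite RtoC_mult. ring.
  - destruct IHm as [r [Hr IH]]; [intros; apply Hz; lia|].
    exists (r * Cnorm2 (herm H o (x (S m)))). split.
    + apply Rmult_lt_0_compat; auto. apply Cnorm2_gt_0, Hz. lia.
    + simpl prod_upto.
      transitivity (- (prod_upto (fun j => triple H o (x j) (x (S j))) m * herm H o (x m)
         * herm H (x m) (x (S m)) * (herm H o (x (S m)) * Cconj (herm H o (x (S m))))))%C.
      { unfold triple at 2. rewrite (herm_conj_sym H HH o (x (S m))). ring. }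
      rewrite IH, Cmult_conj_Cnorm2. simpl pow. rewrite !RtoC_mult, RtoC_m1. ring.
Qed.

Section HnRepresentation.

Variable H : mat.
Hypothesis H_sig : signature_pm H.
Let H_herm : hermitian_mat H := proj1 H_sig.
Variables (n : nat) (Rl : nat -> mat).
Hypothesis Rl_rep : is_Hn_rep H n Rl.
Hypothesis n_pos : (1 <= n)%nat.

Lemma Rl_unitary i : (1 <= i <= n)%nat -> unitary H (Rl i).
Proof. apply Rl_rep. Qed.

Lemma orbit_closed_ball p k : closed_ball_pt H p -> (k <= n)%nat -> closed_ball_pt H (orbit_pts Rl p k).
Proof.
  intros Hp. induction k; intros Hk; simpl; auto.
  apply unitary_closed_ball; [auto | apply Rl_unitary; lia | apply IHk; lia].
Qed.

Lemma orbit_negative p k : negative_pt H p -> (k <= n)%nat -> negative_pt H (orbit_pts Rl p k).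
Proof.
  intros Hp. induction k; intros Hk; simpl; auto.
  apply unitary_negative; [auto | apply Rl_unitary; lia | apply IHk; lia].
Qed.

Lemma prod_lifts_scalar : exists l : C,
  l <> 0 /\ prod_lifts Rl n = scalar_mat l /\ forall p, orbit_pts Rl p n = scal l p.
Proof.
  destruct Rl_rep as [_ [_ [l E]]].
  assert (Ep : forall p, orbit_pts Rl p n = scal l p)
    by (intros p; rewrite orbit_pts_prod_lifts, E, mv_scalar_mat; reflexivity).
  exists l. repeat split; auto.
  destruct (exists_negative_pt H H_sig) as [o Ho]. intro Z.
  apply (proj1 (orbit_negative o n Ho (le_n n))). rewrite Ep, Z. apply scal_zero.
Qed.

Lemma area_rho_fan_area c o p : negative_pt H o -> closed_ball_pt H c -> closed_ball_pt H p ->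
  area_rho H n Rl c p = fan_area H o (orbit_pts Rl p) n.
Proof.
  intros Ho Hc Hp. destruct prod_lifts_scalar as [l [Hl [_ El]]]. unfold area_rho.
  rewrite (area_poly_fan_area H c _ n l), (fan_area_center H c o _ n l); auto.
  intros j Hj. apply orbit_closed_ball; auto.
Qed.

(** Telescope the quadrilateral identity of each [Rl (S j)] along the two orbits. *)
Lemma fan_area_orbit_indep o p q : negative_pt H o -> closed_ball_pt H p -> closed_ball_pt H q ->
  fan_area H o (orbit_pts Rl p) n = fan_area H o (orbit_pts Rl q) n.
Proof.
  intros Ho Hp Hq. assert (Ob : closed_ball_pt H o) by (left; auto).
  set (x := orbit_pts Rl p). set (y := orbit_pts Rl q).
  set (h := fun j => area_tri H o (x j) (y j)).
  destruct prod_lifts_scalar as [l [Hl [_ El]]]. unfold fan_area.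
  transitivity (sum_upto (fun j => area_tri H o (y j) (y (S j)) + (h j - h (S j))) n).
  - apply sum_upto_ext. intros j Hj. unfold h, x, y. simpl orbit_pts.
    assert (Hxj := orbit_closed_ball p j Hp ltac:(lia)).
    assert (Hyj := orbit_closed_ball q j Hq ltac:(lia)).
    assert (HJ : unitary H (Rl (S j))) by (apply Rl_unitary; lia).
    pose proof (area_tri_involution_quad H (Rl (S j)) o _ _ H_sig HJ
      (proj1 (proj2 Rl_rep) (S j) ltac:(lia)) Ho Hxj Hyj) as Q.
    rewrite (area_tri_swap H H_sig o (orbit_pts Rl q j)), (area_tri_swap H H_sig o (orbit_pts Rl p j))
      in Q by (auto; apply unitary_closed_ball; auto).
    lra.
  - rewrite sum_upto_plus, sum_upto_telescope. unfold h, x, y.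
    rewrite !El, area_tri_scal_m, area_tri_scal_r by auto. simpl. ring.
Qed.

Lemma area_rho_indep p p' c c' :
  closed_ball_pt H p -> closed_ball_pt H p' -> closed_ball_pt H c -> closed_ball_pt H c' ->
  area_rho H n Rl c p = area_rho H n Rl c' p'.
Proof.
  intros Hp Hp' Hc Hc'. destruct (exists_negative_pt H H_sig) as [o Ho].
  rewrite (area_rho_fan_area c o p), (area_rho_fan_area c' o p') by auto.
  apply fan_area_orbit_indep; auto.
Qed.

Hypothesis Rl_nonscalar : forall i, (1 <= i <= n)%nat -> ~ is_scalar (Rl i).

Lemma prod_herm_orbit_sq p m : negative_pt H p -> (m <= n)%nat ->
  exists r, 0 < r /\
  (prod_upto (fun k => herm H (orbit_pts Rl p k) (orbit_pts Rl p (S k))) m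
   * prod_upto (fun k => herm H (orbit_pts Rl p k) (orbit_pts Rl p (S k))) m
   * detm (prod_lifts Rl m))%C = RtoC ((-1) ^ m * r).
Proof.
  intros Hp. induction m; intros Hm.
  - exists 1. split; [lra|]. simpl. rewrite detm_scalar_mat, RtoC_mult. ring.
  - destruct IHm as [r [Hr IH]]; [lia|].
    destruct (proj1 (proj2 Rl_rep) (S m) ltac:(lia)) as [s Es].
    destruct (involution_sign H H_sig (Rl (S m)) s (Rl_unitary (S m) ltac:(lia)) Es
      (Rl_nonscalar (S m) ltac:(lia)) (orbit_pts Rl p m)) as [r' [Hr' E']].
    { apply orbit_negative; auto. lia. }
    exists (r * r'). split; [apply Rmult_lt_0_compat; auto|].
    simpl prod_upto. simpl prod_lifts. rewrite detm_mm.
    set (P := prod_upto _ m) in *. simpl orbit_pts in E' |- *.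
    set (h := herm H (orbit_pts Rl p m) (mv (Rl (S m)) (orbit_pts Rl p m))) in *.
    transitivity (P * P * detm (prod_lifts Rl m) * (h * h * detm (Rl (S m))))%C; [ring|].
    rewrite IH, E'. simpl pow. rewrite !RtoC_mult, RtoC_opp, RtoC_m1. ring.
Qed.

Lemma prod_triple_orbit_sq o : negative_pt H o ->
  exists r, 0 < r /\
  (prod_upto (fun j => triple H o (orbit_pts Rl o j) (orbit_pts Rl o (S j))) n
   * prod_upto (fun j => triple H o (orbit_pts Rl o j) (orbit_pts Rl o (S j))) n)%C
  = RtoC ((-1) ^ n * r).
Proof.
  intros Ho.
  assert (Hx : forall j, (j <= n)%nat -> herm H o (orbit_pts Rl o j) <> 0).
  { intros j Hj. apply herm_neq_0; auto; try (left; auto; apply orbit_negative; auto).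
    apply negative_not_equal_isotropic_l; auto. }
  destruct (prod_triple_fan H o (orbit_pts Rl o) n H_herm Hx) as [r [Hr E]].
  destruct (prod_herm_orbit_sq o n Ho (le_n n)) as [r2 [Hr2 E2]].
  destruct prod_lifts_scalar as [l [Hl [El Exn]]].
  rewrite El, detm_scalar_mat in E2. rewrite Exn, herm_scal_r in E.
  change (orbit_pts Rl o O) with o in E.
  refine (square_sign_transfer _ _ l n r r2 Hl Hr Hr2 _ E2).
  apply (Cmult_eq_reg_l (herm H o o)); [|apply (Hx O); lia].
  rewrite Cmult_comm, <- Cmult_assoc, E. ring.
Qed.

Lemma area_rho_mod_2PI p c : closed_ball_pt H p -> closed_ball_pt H c ->
  exists k : Z, area_rho H n Rl c p = INR n * PI + 2 * IZR k * PI.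
Proof.
  intros Hp Hc. destruct (exists_negative_pt H H_sig) as [o Ho].
  assert (Ob : closed_ball_pt H o) by (left; auto).
  assert (Hx : forall j, (j <= n)%nat -> negative_pt H (orbit_pts Rl o j))
    by (intros; apply orbit_negative; auto).
  rewrite (area_rho_indep p o c o), (area_rho_fan_area o o o), fan_area_negative by auto.
  set (T := fun j => triple H o (orbit_pts Rl o j) (orbit_pts Rl o (S j))).
  change (exists k : Z, 2 * sum_upto (fun j => arg (T j)) n = INR n * PI + 2 * IZR k * PI).
  assert (TNZ : forall j, (j < n)%nat -> T j <> 0).
  { intros j Hj. unfold T.
    apply triple_neq_0; apply herm_neq_0; try (left; apply Hx; lia); auto;
      apply negative_not_equal_isotropic_l; auto; apply Hx; lia. }
  destruct (arg_prod_upto T n TNZ) as [k1 K1].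
  destruct (prod_triple_orbit_sq o Ho) as [r [Hr E]]. fold T in E.
  destruct (arg_sqrt_sign (prod_upto T n) n r (prod_upto_neq_0 T n TNZ) Hr E) as [k2 K2].
  exists (k2 + 2 * k1)%Z. rewrite K1, plus_IZR, mult_IZR.
  replace (2 * (arg (prod_upto T n) + 2 * IZR k1 * PI)) with
    (2 * arg (prod_upto T n) + 4 * (IZR k1 * PI)) by ring.
  rewrite K2. simpl (IZR 2). ring.
Qed.

End HnRepresentation.

Theorem lemma3p2 :
  forall (H : mat) (n : nat) (Rl : nat -> mat),
    signature_pm H ->
    (5 <= n)%nat ->
    is_Hn_rep H n Rl ->
    (forall p p' c c' : vec,
        closed_ball_pt H p -> closed_ball_pt H p' ->
        closed_ball_pt H c -> closed_ball_pt H c' ->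
        area_rho H n Rl c p = area_rho H n Rl c' p') /\
    ((forall i, (1 <= i <= n)%nat -> ~ is_scalar (Rl i)) ->
     forall p c : vec, closed_ball_pt H p -> closed_ball_pt H c ->
       exists k : Z, area_rho H n Rl c p = INR n * PI + 2 * IZR k * PI).
Proof.
  intros H n Rl HS Hn Hrep. assert (Hn1 : (1 <= n)%nat) by lia. split.
  - apply area_rho_indep; auto.
  - intros NS. apply area_rho_mod_2PI; auto.
Qed.
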